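(* Let $k$ be a field and let $A$ be a $k$-algebra with two graded algebra decompositions $A=\bigoplus_{i=0}^{\infty}A_i=\bigoplus_{i=0}^{\infty}B_i$ (each a grading making $A$ a graded algebra) such that (1) $A_0=B_0=k$; (2) $A$ is generated as an algebra by $A_1$, and also generated as an algebra by $B_1$; (3) either $A_1$ or $B_1$ is finite dimensional over $k$. Then there is an algebra automorphism $\phi:A\to A$ such that $\phi(A_i)=B_i$ for all $i$.
   Context: All algebras are associative unital $k$-algebras. *)

From HB Require Import structures.
From mathcomp Require Import all_boot all_order all_algebra.
Set Implicit Arguments. Unset Strict Implicit. Unset Printing Implicit Defensive.
Import GRing.Theory.
Local Open Scope ring_scope.

Section Grading.
Variables (k : fieldType) (A : algType k).

Definition subspace (S : A -> Prop) : Prop :=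
  S 0 /\ (forall (c : k) x y, S x -> S y -> S (c *: x + y)).

Definition is_algebra_grading (G : nat -> A -> Prop) : Prop :=
  [/\ forall i, subspace (G i),
      forall a : A, exists (n : nat) (c : nat -> A),
        (forall i, G i (c i)) /\ a = \sum_(i < n) c i,
      forall (n : nat) (c : nat -> A),
        (forall i, G i (c i)) -> \sum_(i < n) c i = 0 ->
        forall i, (i < n)%N -> c i = 0,
      G 0 1 &
      forall i j x y, G i x -> G j y -> G (i + j)%N (x * y)].

Definition degree0_is_scalars (G : nat -> A -> Prop) : Prop :=
  forall x, G 0 x <-> exists c : k, x = c%:A.

Definition subalgebra (S : A -> Prop) : Prop :=
  [/\ S 1, subspace S & forall x y, S x -> S y -> S (x * y)].

Definition generates_algebra (X : A -> Prop) : Prop :=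
  forall S, subalgebra S -> (forall x, X x -> S x) -> forall a, S a.

Definition finite_dimensional (X : A -> Prop) : Prop :=
  exists s : seq A, (forall x, x \in s -> X x) /\
    forall x, X x -> exists c : 'I_(size s) -> k, x = \sum_(i < size s) c i *: s`_i.

End Grading.

From HB Require Import structures.
From mathcomp Require Import all_boot all_order all_algebra.
From Stdlib Require Import Classical ClassicalEpsilon.
Import GRing.Theory.
Local Open Scope ring_scope.
Set Implicit Arguments. Unset Strict Implicit. Unset Printing Implicit Defensive.

(* Say that [a] has G-degree >= j (H-degree <= j) when all its G-components
   (H-components) have degree >= j (<= j).  As A is generated by H_1 and every
   element of H_1 is a scalar plus an element of G-degree >= 1, every [a] is
   congruent, modulo G-degree >= j+1, to some [b] of H-degree <= j.  This [b]
   is unique: the space of H-degree <= j is finite dimensional, and composing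
   the truncations to G-degree <= j and back to H-degree <= j gives a
   surjective, hence injective, endomorphism of it that kills every element of
   G-degree >= j+1.  Sending a G-homogeneous [x] of degree j to the degree-j
   H-component of its approximation [b] is multiplicative, and extends to the
   required automorphism. *)

Section Span.
Variables (k : fieldType) (V : lmodType k).

Definition lincomb (xs : seq V) (c : 'rV[k]_(size xs)) : V :=
  \sum_(i < size xs) c 0 i *: xs`_i.
Arguments lincomb : clear implicits.

Lemma lincomb_is_linear xs : linear (lincomb xs).
Proof.
move=> a c d; rewrite /lincomb scaler_sumr -big_split.
by apply: eq_bigr => i _; rewrite !mxE scalerDl scalerA.
Qed.

HB.instance Definition _ xs :=
  GRing.isLinear.Build k _ V *:%R (lincomb xs) (@lincomb_is_linear xs).

Definition in_span (xs : seq V) (v : V) := exists c, v = lincomb xs c.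

Definition lin_indep (xs : seq V) := forall c, lincomb xs c = 0 -> c = 0.

Lemma in_span0 xs : in_span xs 0.
Proof. by exists 0; rewrite linear0. Qed.

Lemma in_span_lin xs (a : k) u v :
  in_span xs u -> in_span xs v -> in_span xs (a *: u + v).
Proof. by move=> [c ->] [d ->]; exists (a *: c + d); rewrite linearP. Qed.

Lemma in_spanZ xs (a : k) v : in_span xs v -> in_span xs (a *: v).
Proof. by move=> *; rewrite -[_ *: v]addr0; apply/in_span_lin/in_span0. Qed.

Lemma lincomb_delta xs (i : 'I_(size xs)) : lincomb xs (delta_mx 0 i) = xs`_i.
Proof.
rewrite /lincomb (bigD1 i) //= big1 => [|j /negbTE ji]; last by rewrite mxE ji scale0r.
by rewrite mxE !eqxx scale1r addr0.
Qed.

Lemma in_span_mem xs x : x \in xs -> in_span xs x.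
Proof.
move=> xx; have ix : (index x xs < size xs)%N by rewrite index_mem.
by exists (delta_mx 0 (Ordinal ix)); rewrite lincomb_delta nth_index.
Qed.

Lemma in_span_min (S : V -> Prop) xs :
  S 0 -> (forall a u v, S u -> S v -> S (a *: u + v)) -> {in xs, forall x, S x} ->
  forall v, in_span xs v -> S v.
Proof.
move=> S0 Slin Sxs _ [c ->]; apply: big_ind => //.
  by move=> u v Su Sv; rewrite -[u]scale1r; apply: Slin.
by move=> i _; rewrite -[_ *: _]addr0; apply/Slin/S0/Sxs/mem_nth.
Qed.

Lemma in_span_trans xs ys :
  {in xs, forall x, in_span ys x} -> forall v, in_span xs v -> in_span ys v.
Proof. by move=> sub; apply: in_span_min => //; [apply: in_span0 | apply: in_span_lin]. Qed.

Lemma in_span_subset xs ys : {subset xs <= ys} -> forall v, in_span xs v -> in_span ys v.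
Proof. by move=> sub; apply: in_span_trans => x /sub; apply: in_span_mem. Qed.

Lemma lincomb_inj xs : lin_indep xs -> injective (lincomb xs).
Proof. by move=> xs_indep c d /eqP; rewrite -subr_eq0 -linearB => /eqP/xs_indep/subr0_eq. Qed.

Lemma lincomb_cons x xs (c : 'rV_(size xs).+1) :
  lincomb (x :: xs) c = c 0 0 *: x + lincomb xs (\row_i c 0 (lift ord0 i)).
Proof. by rewrite /lincomb big_ord_recl; congr (_ + _); apply: eq_bigr => i _; rewrite mxE. Qed.

Lemma exists_basis xs :
  exists2 bs, lin_indep bs & forall v, in_span bs v <-> in_span xs v.
Proof.
elim: xs => [|x xs [bs bs_indep bs_span]].
  by exists [::] => [c _|//]; apply/rowP => -[].
have xs_sub : {subset xs <= x :: xs} by move=> y yy; rewrite inE yy orbT.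
have [x_bs | x_bs] := classic (in_span bs x).
  exists bs => // v; split => [/bs_span|]; first exact: (in_span_subset xs_sub).
  apply: in_span_trans => y; rewrite inE => /predU1P[-> //|/in_span_mem].
  by rewrite bs_span.
exists (x :: bs) => [c|v].
  rewrite lincomb_cons => c0.
  have cx0 : c 0 0 = 0.
    apply: contra_not_eq x_bs => cx; rewrite -(scalerK cx x).
    move/eqP: c0; rewrite addr_eq0 => /eqP ->.
    by rewrite -scaleN1r; do 2 apply: in_spanZ; eexists.
  move: c0; rewrite cx0 scale0r add0r => /bs_indep c'0.
  apply/rowP => i; case: (unliftP ord0 i) => [j ->|->]; last by rewrite cx0 mxE.
  by move/rowP: c'0 => /(_ j); rewrite !mxE.
have bs_sub : {subset bs <= x :: bs} by move=> y yy; rewrite inE yy orbT.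
split; apply: in_span_trans => y; rewrite inE => /predU1P[->|].
- by apply/in_span_mem; rewrite inE eqxx.
- by move/in_span_mem/bs_span; apply: (in_span_subset xs_sub).
- by apply/in_span_mem; rewrite inE eqxx.
- by move/in_span_mem/bs_span; apply: (in_span_subset bs_sub).
Qed.

Lemma linear_surj_inj xs (L : {linear V -> V}) :
  (forall v, in_span xs v -> in_span xs (L v)) ->
  (forall v, in_span xs v -> exists2 u, in_span xs u & L u = v) ->
  forall v, in_span xs v -> L v = 0 -> v = 0.
Proof.
move=> Lxs L_onto.
have [bs bs_indep bs_span] := exists_basis xs.
have bs_xs (l : 'I_(size bs)) : in_span xs bs`_l by apply/bs_span/in_span_mem/mem_nth.
have Lbs (l : 'I_(size bs)) : {c | L bs`_l = lincomb bs c}.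
  by apply: sig_eqW; apply/bs_span/Lxs.
have [m Lm] := all_sig Lbs.
have bs_onto (l : 'I_(size bs)) : {c | L (lincomb bs c) = bs`_l}.
  apply: (sig_eqW (lhs := L \o lincomb bs)) => /=.
  by have [_ /bs_span[c ->] <-] := L_onto _ (bs_xs l); exists c.
have [d Ld] := all_sig bs_onto.
pose M := \matrix_l m l; pose D := \matrix_l d l.
have LM c : L (lincomb bs c) = lincomb bs (c *m M).
  rewrite mulmx_sum_row !linear_sum; apply: eq_bigr => l _.
  by rewrite !linearZ /= Lm rowK.
have DM : D *m M = 1%:M.
  apply/row_matrixP => l; rewrite row_mul rowK row1.
  apply: (lincomb_inj bs_indep); rewrite -LM.
  by rewrite lincomb_delta -Ld.
move=> _ /bs_span[c ->]; rewrite LM -[X in _ = X](linear0 (lincomb bs)).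
move=> /(lincomb_inj bs_indep) cM0.
by rewrite -[c]mulmx1 -(mulmx1C DM) mulmxA cM0 mul0mx linear0.
Qed.

End Span.

Lemma in_span_linear (k : fieldType) (V W : lmodType k) (f : {linear V -> W}) xs v :
  in_span xs v -> in_span (map f xs) (f v).
Proof.
apply: (in_span_min (S := fun v => in_span (map f xs) (f v))).
- by rewrite linear0; apply: in_span0.
- by move=> a u w *; rewrite linearP; apply: in_span_lin.
- by move=> x xx; apply/in_span_mem/map_f.
Qed.


Section Subspace.
Variables (k : fieldType) (A : algType k) (S : A -> Prop).
Hypothesis S_subspace : subspace S.

Lemma subspace0 : S 0. Proof. by case: S_subspace. Qed.

Lemma subspace_lin (a : k) x y : S x -> S y -> S (a *: x + y).
Proof. by case: S_subspace => _; apply. Qed.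

Lemma subspaceD x y : S x -> S y -> S (x + y).
Proof. by move=> *; rewrite -[x]scale1r; apply: subspace_lin. Qed.

Lemma subspaceZ (a : k) x : S x -> S (a *: x).
Proof. by move=> *; rewrite -[_ *: x]addr0; apply/subspace_lin/subspace0. Qed.

Lemma subspaceB x y : S x -> S y -> S (x - y).
Proof. by move=> *; rewrite -scaleN1r addrC; apply: subspace_lin. Qed.

Lemma subspace_sum (I : Type) (r : seq I) (P : pred I) (F : I -> A) :
  (forall i, P i -> S (F i)) -> S (\sum_(i <- r | P i) F i).
Proof. by move=> SF; apply: big_ind => //; [apply: subspace0 | apply: subspaceD]. Qed.

Lemma subspace_span xs : {in xs, forall x, S x} -> forall v, in_span xs v -> S v.
Proof. by apply: in_span_min; [apply: subspace0 | apply: subspace_lin]. Qed.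

End Subspace.

Lemma in_span_subspace (k : fieldType) (A : algType k) (xs : seq A) :
  subspace (in_span xs).
Proof. by split; [apply: in_span0 | apply: in_span_lin]. Qed.

Lemma sum_ord_widen (V : nmodType) n N (F : nat -> V) : (n <= N)%N ->
  \sum_(i < n) F i = \sum_(i < N) (if (i < n)%N then F i else 0).
Proof. by move=> nN; rewrite (big_ord_widen _ _ nN) big_mkcond. Qed.

Lemma sum_ord_single (V : nmodType) N (i0 : 'I_N) (F : 'I_N -> V) :
  (forall i : 'I_N, i != i0 -> F i = 0) -> \sum_(i < N) F i = F i0.
Proof. by move=> F0; rewrite (bigD1 i0) //= big1 ?addr0. Qed.
Arguments sum_ord_single {V N} i0 {F}.

Section Grading.
Variables (k : fieldType) (A : algType k) (G : nat -> A -> Prop).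
Hypothesis G_grading : is_algebra_grading G.

Lemma grading_subspace i : subspace (G i). Proof. by case: G_grading. Qed.

Lemma grading1 : G 0 1. Proof. by case: G_grading. Qed.

Lemma gradingM i j x y : G i x -> G j y -> G (i + j) (x * y).
Proof. by case: G_grading => _ _ _ _; apply. Qed.

Lemma grading_direct n (c : nat -> A) : (forall i, G i (c i)) ->
  \sum_(i < n) c i = 0 -> forall i, (i < n)%N -> c i = 0.
Proof. by case: G_grading => _ _ + _ _; apply. Qed.

Lemma grading0 i : G i 0. Proof. exact: subspace0 (grading_subspace i). Qed.

Lemma exists_decomposition a :
  exists nc : nat * (nat -> A), (forall i, G i (nc.2 i)) /\ a = \sum_(i < nc.1) nc.2 i.
Proof. by case: G_grading => _ /(_ a)[n [c [Gc aE]]] *; exists (n, c). Qed.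

(* [deg_bound a] bounds the degrees occurring in [a]; it depends on the chosen
   decomposition, whereas [hcomp i a] does not (see [hcomp_uniq]). *)
Definition decomposition a :=
  proj1_sig (constructive_indefinite_description _ (exists_decomposition a)).
Definition deg_bound a := (decomposition a).1.
Definition hcomp i a := if (i < deg_bound a)%N then (decomposition a).2 i else 0.

Lemma decompositionP a :
  (forall i, G i ((decomposition a).2 i)) /\ a = \sum_(i < deg_bound a) (decomposition a).2 i.
Proof. exact: proj2_sig (constructive_indefinite_description _ (exists_decomposition a)). Qed.

Lemma hcomp_graded i a : G i (hcomp i a).
Proof. by rewrite /hcomp; case: ifP => _; [apply: (decompositionP a).1 | apply: grading0]. Qed.

Lemma hcomp_ge_bound i a : (deg_bound a <= i)%N -> hcomp i a = 0.
Proof. by rewrite /hcomp leqNgt => /negbTE ->. Qed.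

Lemma sum_hcomp a N : (deg_bound a <= N)%N -> a = \sum_(i < N) hcomp i a.
Proof. by move=> aN; rewrite {1}(decompositionP a).2 (sum_ord_widen _ aN). Qed.

Lemma hcomp_uniq a n (c : nat -> A) : (forall i, G i (c i)) -> a = \sum_(i < n) c i ->
  forall i, hcomp i a = if (i < n)%N then c i else 0.
Proof.
move=> Gc aE i; pose N := maxn n (deg_bound a).
pose e j := (if (j < n)%N then c j else 0) - hcomp j a.
have Ge j : G j (e j).
  apply: (subspaceB (grading_subspace j)); last exact: hcomp_graded.
  by case: ifP => _; [apply: Gc | apply: grading0].
have sum_e : \sum_(j < N) e j = 0.
  by rewrite sumrB -sum_ord_widen ?leq_maxl // -aE -sum_hcomp ?leq_maxr // subrr.
have [iN | Ni] := ltnP i N.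
  by apply/esym/eqP; rewrite -subr_eq0; apply/eqP; apply: grading_direct Ge sum_e i iN.
rewrite hcomp_ge_bound ?ifN // -?leqNgt; apply: leq_trans Ni; [exact: leq_maxl | exact: leq_maxr].
Qed.

Lemma hcomp_hom i j x : G j x -> hcomp i x = if i == j then x else 0.
Proof.
move=> Gx; rewrite (@hcomp_uniq x j.+1 (fun l => if l == j then x else 0)).
- by rewrite ltnS; case: ltngtP.
- by move=> l; case: eqP => [->|_] //; apply: grading0.
by rewrite big_ord_recr /= eqxx big1 ?add0r // => l _; rewrite ltn_eqF.
Qed.

Lemma hcomp_is_linear i : linear (hcomp i).
Proof.
move=> a x y; pose N := maxn (deg_bound x) (deg_bound y).
rewrite (@hcomp_uniq (a *: x + y) N (fun l => a *: hcomp l x + hcomp l y)).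
- case: ltnP => // Ni; rewrite !hcomp_ge_bound ?scaler0 ?addr0 //.
    exact: leq_trans (leq_maxr _ _) Ni.
  exact: leq_trans (leq_maxl _ _) Ni.
- by move=> l; apply: (subspace_lin (grading_subspace l)); apply: hcomp_graded.
by rewrite big_split /= -scaler_sumr -!sum_hcomp ?leq_maxl ?leq_maxr.
Qed.

HB.instance Definition _ i :=
  GRing.isLinear.Build k A A *:%R (hcomp i) (hcomp_is_linear i).

Lemma hcomp_id i j a : hcomp i (hcomp j a) = if i == j then hcomp j a else 0.
Proof. exact/hcomp_hom/hcomp_graded. Qed.

Lemma hcompM p x y N : (deg_bound x <= N)%N -> (deg_bound y <= N)%N ->
  hcomp p (x * y) =
  \sum_(l < N) \sum_(m < N) (if (l + m == p)%N then hcomp l x * hcomp m y else 0).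
Proof.
move=> xN yN; rewrite {1}(sum_hcomp xN) {1}(sum_hcomp yN) mulr_suml linear_sum.
apply: eq_bigr => l _; rewrite mulr_sumr linear_sum; apply: eq_bigr => m _ /=.
by rewrite (hcomp_hom _ (gradingM (hcomp_graded l x) (hcomp_graded m y))) eq_sym.
Qed.

Definition deg_ge j a := forall i, (i < j)%N -> hcomp i a = 0.
Definition deg_le j a := forall i, (j < i)%N -> hcomp i a = 0.

Lemma deg_ge_subspace j : subspace (deg_ge j).
Proof.
by split=> [i _|c x y hx hy i ij]; rewrite ?linear0 // linearP /= hx ?hy ?scaler0 ?addr0.
Qed.

Lemma deg_le_subspace j : subspace (deg_le j).
Proof.
by split=> [i _|c x y hx hy i ij]; rewrite ?linear0 // linearP /= hx ?hy ?scaler0 ?addr0.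
Qed.

Lemma deg_geW i j x : (i <= j)%N -> deg_ge j x -> deg_ge i x.
Proof. by move=> ij h l li; apply/h/leq_trans/ij. Qed.

Lemma deg_leW i j x : (i <= j)%N -> deg_le i x -> deg_le j x.
Proof. by move=> ij h l jl; apply/h/leq_ltn_trans/jl. Qed.

Lemma hom_deg_ge j x : G j x -> deg_ge j x.
Proof. by move=> Gx i ij; rewrite (hcomp_hom _ Gx) ltn_eqF. Qed.

Lemma hom_deg_le j x : G j x -> deg_le j x.
Proof. by move=> Gx i ji; rewrite (hcomp_hom _ Gx) gtn_eqF. Qed.

Lemma deg_geM i j x y : deg_ge i x -> deg_ge j y -> deg_ge (i + j) (x * y).
Proof.
move=> hx hy p pij.
rewrite (@hcompM p x y (maxn (deg_bound x) (deg_bound y))) ?leq_maxl ?leq_maxr //.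
apply: big1 => l _; apply: big1 => m _; case: eqP => // lmp.
have [li | il] := ltnP l i; first by rewrite hx ?mul0r.
by rewrite hy ?mulr0 // -(ltn_add2l l) lmp (leq_trans pij) ?leq_add2r.
Qed.

Lemma deg_leM i j x y : deg_le i x -> deg_le j y -> deg_le (i + j) (x * y).
Proof.
move=> hx hy p pij.
rewrite (@hcompM p x y (maxn (deg_bound x) (deg_bound y))) ?leq_maxl ?leq_maxr //.
apply: big1 => l _; apply: big1 => m _; case: eqP => // lmp.
have [il | li] := ltnP i l; first by rewrite hx ?mul0r.
by rewrite hy ?mulr0 // -(ltn_add2l l) lmp (leq_ltn_trans _ pij) ?leq_add2r.
Qed.

Lemma hcompM_deg_le i j x y : deg_le i x -> deg_le j y ->
  hcomp (i + j) (x * y) = hcomp i x * hcomp j y.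
Proof.
move=> hx hy; pose N := maxn (maxn (deg_bound x) (deg_bound y)) (i + j).+1.
have iN : (i < N)%N by rewrite !leq_max ltnS leq_addr orbT.
have jN : (j < N)%N by rewrite !leq_max ltnS leq_addl orbT.
rewrite (@hcompM _ x y N) ?leq_max ?leqnn ?orbT // (sum_ord_single (Ordinal iN)) /=.
  rewrite (sum_ord_single (Ordinal jN)) /= ?eqxx // => m mj.
  by rewrite ifN // eqn_add2l; apply: contraNneq mj => mj; apply/eqP/val_inj.
move=> l li; apply: big1 => m _; case: eqP => // lmij.
have [il | lei] := ltnP i l; first by rewrite hx ?mul0r.
have l_lt_i : (l < i)%N.
  by rewrite ltn_neqAle lei andbT; apply: contraNneq li => li; apply/eqP/val_inj.
by rewrite hy ?mulr0 // -(ltn_add2l l) lmij ltn_add2r.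
Qed.

Definition trunc j a := \sum_(i < j.+1) hcomp i a.

Lemma trunc_is_linear j : linear (trunc j).
Proof.
by move=> c x y; rewrite /trunc scaler_sumr -big_split; apply: eq_bigr => i _; rewrite linearP.
Qed.

HB.instance Definition _ j :=
  GRing.isLinear.Build k A A *:%R (trunc j) (trunc_is_linear j).

Lemma hcomp_trunc i j a : hcomp i (trunc j a) = if (i <= j)%N then hcomp i a else 0.
Proof.
rewrite linear_sum /=; under eq_bigr => l _ do rewrite hcomp_id.
case: leqP => ij.
  rewrite (sum_ord_single (Ordinal (ij : (i < j.+1)%N))) /= ?eqxx // => l.
  by rewrite -(inj_eq val_inj) /= eq_sym => /negbTE ->.
by apply: big1 => l _; case: eqP => // il; move: (ltn_ord l); rewrite -il ltnS leqNgt ij.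
Qed.

Lemma deg_le_trunc j a : deg_le j (trunc j a).
Proof. by move=> i ji; rewrite hcomp_trunc leqNgt ji. Qed.

Lemma trunc_id j a : deg_le j a -> trunc j a = a.
Proof.
move=> h; pose N := maxn (deg_bound a) j.+1.
rewrite [RHS](@sum_hcomp a N) ?leq_maxl // /trunc.
rewrite (@sum_ord_widen _ j.+1 N (hcomp^~ a)) ?leq_maxr //.
by apply: eq_bigr => i _; case: ltnP => // ji; rewrite h.
Qed.

Lemma trunc_deg_ge j a : deg_ge j.+1 a -> trunc j a = 0.
Proof. by move=> h; apply: big1 => i _; apply: h. Qed.

Lemma deg_ge_sub_trunc j a : deg_ge j.+1 (a - trunc j a).
Proof. by move=> i ij; rewrite linearB /= hcomp_trunc -ltnS ij subrr. Qed.

Lemma trunc_eq j x y : deg_ge j.+1 (x - y) -> trunc j x = trunc j y.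
Proof. by move=> h; apply/eqP; rewrite -subr_eq0 -linearB /= trunc_deg_ge. Qed.

Lemma scalar_deg_le j x : G 0 x -> deg_le j x.
Proof. by move=> h; apply/deg_leW/hom_deg_le/h. Qed.

End Grading.

Lemma in_span_mul (k : fieldType) (A : algType k) (xs ys zs : seq A) a b :
  (forall x y, x \in xs -> y \in ys -> x * y \in zs) ->
  in_span xs a -> in_span ys b -> in_span zs (a * b).
Proof.
move=> xys_zs a_xs b_ys; pose S := fun a => in_span zs (a * b).
apply: (subspace_span (S := S)) a_xs => [|x xx].
  split=> [|c u v Su Sv]; rewrite /S ?mul0r ?mulrDl -?scalerAl; first exact: in_span0.
  exact: in_span_lin.
apply: (subspace_span (S := fun b => in_span zs (x * b))) b_ys => [|y yy].
  split=> [|c u v Su Sv]; rewrite ?mulr0 ?mulrDr -?scalerAr; first exact: in_span0.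
  exact: in_span_lin.
exact/in_span_mem/xys_zs.
Qed.

Lemma finite_dimensional_span (k : fieldType) (A : algType k) (X : A -> Prop) :
  finite_dimensional X -> exists2 s, {in s, forall x, X x} & forall x, X x -> in_span s x.
Proof.
move=> [s [sX Xs]]; exists s => // x /Xs[c ->].
by exists (\row_i c i); apply: eq_bigr => i _; rewrite mxE.
Qed.

Section Words.
Variables (k : fieldType) (A : algType k) (G : nat -> A -> Prop).
Hypotheses (G_grading : is_algebra_grading G) (G1_gen : generates_algebra (G 1)).
Variable s : seq A.
Hypotheses (s_G1 : {in s, forall x, G 1 x}) (G1_s : forall x, G 1 x -> in_span s x).

Fixpoint words l := if l is l'.+1 then [seq x * w | x <- s, w <- words l'] else [:: 1].

Definition words_upto j := flatten [seq words l | l <- iota 0 j.+1].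

Lemma mem_words_upto j w : w \in words_upto j <-> exists2 l, (l <= j)%N & w \in words l.
Proof.
split=> [/flattenP[ws /mapP[l]] | [l lj wl]].
  by rewrite mem_iota => lj -> wl; exists l.
by apply/flattenP; exists (words l) => //; apply/map_f; rewrite mem_iota.
Qed.

Lemma words_hom l w : w \in words l -> G l w.
Proof.
elim: l w => [|l IH] w /=; first by rewrite inE => /eqP ->; exact: grading1.
case/allpairsP=> -[x u] [/= xs ul ->]; rewrite -add1n.
by apply: (gradingM G_grading); [exact: s_G1 xs | exact: IH].
Qed.

Lemma words_mul l l' w w' : w \in words l -> w' \in words l' -> w * w' \in words (l + l').
Proof.
elim: l w => [|l IH] w /=; first by rewrite inE => /eqP ->; rewrite mul1r.
case/allpairsP=> -[x u] [/= xs ul ->] w'l'; rewrite -mulrA.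
by apply/allpairsP; exists (x, u * w'); split => //; apply: IH.
Qed.

Lemma words_upto_mono i j : (i <= j)%N -> {subset words_upto i <= words_upto j}.
Proof.
by move=> ij w /mem_words_upto[l li wl]; apply/mem_words_upto; exists l => //; apply: leq_trans ij.
Qed.

Lemma in_span_words_upto a : exists N, in_span (words_upto N) a.
Proof.
apply: (G1_gen (S := fun a => exists N, in_span (words_upto N) a)).
- split; first by exists 0%N; apply/in_span_mem/mem_words_upto; exists 0%N; rewrite ?inE.
  + split=> [|c x y [N xN] [M yM]]; first by exists 0%N; apply: in_span0.
    exists (maxn N M); apply: in_span_lin.
      exact: (in_span_subset (words_upto_mono (leq_maxl N M)) xN).
    exact: (in_span_subset (words_upto_mono (leq_maxr N M)) yM).
  + move=> x y [N xN] [M yM]; exists (N + M)%N; apply: in_span_mul xN yM.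
    move=> w w' /mem_words_upto[l lN wl] /mem_words_upto[l' l'M w'l'].
    by apply/mem_words_upto; exists (l + l')%N; [apply: leq_add | apply: words_mul].
- move=> x /G1_s x_s; exists 1%N; apply: in_span_subset x_s => w ws.
  apply/mem_words_upto; exists 1%N => //.
  by apply/allpairsP; exists (w, 1); split; rewrite /= ?inE ?mulr1.
Qed.

Lemma hcomp_in_span_words N i a :
  in_span (words_upto N) a -> in_span (words i) (hcomp G_grading i a).
Proof.
apply: (subspace_span (S := fun a => in_span (words i) (hcomp G_grading i a))).
  by split=> [|c x y *]; rewrite ?linear0 ?linearP; [apply: in_span0 | apply: in_span_lin].
move=> w /mem_words_upto[l _ wl]; rewrite (hcomp_hom _ _ (words_hom wl)).
by case: eqP => [->|_]; [apply: in_span_mem | apply: in_span0].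
Qed.

Lemma deg_le_in_span j a : deg_le G_grading j a <-> in_span (words_upto j) a.
Proof.
split=> [a_le | ]; last first.
  apply: subspace_span; first exact: deg_le_subspace.
  move=> w /mem_words_upto[l lj wl]; exact/(deg_leW lj)/hom_deg_le/words_hom.
rewrite -(trunc_id a_le); have [N aN] := in_span_words_upto a.
apply: subspace_sum; first exact: in_span_subspace.
move=> i _; apply: (in_span_subset _ (hcomp_in_span_words i aN)) => w wi.
by apply/mem_words_upto; exists i; rewrite // -ltnS.
Qed.

End Words.

Lemma deg_le_finite_span (k : fieldType) (A : algType k) (G : nat -> A -> Prop)
    (G_grading : is_algebra_grading G) j :
  generates_algebra (G 1) -> finite_dimensional (G 1) ->
  exists xs, forall a, deg_le G_grading j a <-> in_span xs a.
Proof.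
move=> G1_gen /finite_dimensional_span[s s_G1 G1_s].
by exists (words_upto s j); apply: deg_le_in_span.
Qed.

Section Approximation.
Variables (k : fieldType) (A : algType k) (G H : nat -> A -> Prop).
Hypotheses (G_grading : is_algebra_grading G) (H_grading : is_algebra_grading H).
Hypotheses (G0_scalar : degree0_is_scalars G) (H0_scalar : degree0_is_scalars H).
Hypothesis H1_gen : generates_algebra (H 1).

Let bifiltered l z := deg_le H_grading l z /\ deg_ge G_grading l z.

Let bifiltered_sum a := exists zs : seq (nat * A),
  (forall p, p \in zs -> bifiltered p.1 p.2) /\ a = \sum_(p <- zs) p.2.

Lemma bifiltered_sum_subalgebra : subalgebra bifiltered_sum.
Proof.
split.
- exists [:: (0%N, 1)]; rewrite big_seq1; split=> // p; rewrite inE => /eqP -> /=.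
  by split=> [|i //]; exact: hom_deg_le (grading1 H_grading).
- split=> [|c x y [zx [hx ->]] [zy [hy ->]]]; first by exists [::]; rewrite big_nil.
  exists ([seq (p.1, c *: p.2) | p <- zx] ++ zy).
  rewrite big_cat big_map /= scaler_sumr; split=> // p.
  rewrite mem_cat => /orP[/mapP[q /hx[qH qG] ->] | /hy //].
  by split; [apply: (subspaceZ (deg_le_subspace _ _)) | apply: (subspaceZ (deg_ge_subspace _ _))].
- move=> x y [zx [hx ->]] [zy [hy ->]].
  exists [seq ((p.1 + q.1)%N, p.2 * q.2) | p <- zx, q <- zy].
  rewrite big_allpairs_dep /= mulr_suml; split.
    move=> r /allpairsP[[p q] [/hx[pH pG] /hy[qH qG] ->]].
    by split; [apply: deg_leM | apply: deg_geM].
  by apply: eq_bigr => p _; rewrite mulr_sumr.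
Qed.

(* [b = e + (b - e)], where the G-degree-0 part [e] of [b] is a scalar. *)
Lemma H1_bifiltered_sum b : H 1 b -> bifiltered_sum b.
Proof.
move=> Hb; have [e eE] := (G0_scalar (hcomp G_grading 0 b)).1 (hcomp_graded _ _ _).
have He : H 0 e%:A by apply/H0_scalar; exists e.
exists [:: (0%N, e%:A); (1%N, b - e%:A)].
rewrite big_cons big_seq1 /= addrCA subrr addr0; split=> // p; rewrite !inE.
case/orP=> /eqP -> /=; first by split=> [|i //]; apply: hom_deg_le.
split.
  by apply: (subspaceB (deg_le_subspace _ _)); [apply: hom_deg_le | apply: scalar_deg_le].
move=> i; rewrite ltnS leqn0 => /eqP ->.
have Ge : G 0 e%:A by apply/G0_scalar; exists e.
by rewrite linearB /= eE (hcomp_hom _ _ Ge) subrr.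
Qed.

Lemma approx_exists a j : exists b, deg_le H_grading j b /\ deg_ge G_grading j.+1 (a - b).
Proof.
have [zs [zs_bi ->]] := H1_gen bifiltered_sum_subalgebra H1_bifiltered_sum a.
exists (\sum_(p <- zs | (p.1 <= j)%N) p.2); split.
  rewrite big_seq_cond; apply: subspace_sum; first exact: deg_le_subspace.
  by move=> p /andP[/zs_bi[pH _] pj]; apply: deg_leW pH.
rewrite (bigID (fun p => (p.1 <= j)%N)) /= addrC addrK big_seq_cond.
apply: subspace_sum; first exact: deg_ge_subspace.
by move=> p /andP[/zs_bi[_ pG] pj]; apply: deg_geW pG; rewrite ltnNge.
Qed.

End Approximation.

Section Regrade.
Variables (k : fieldType) (A : algType k) (G H : nat -> A -> Prop).
Hypotheses (G_grading : is_algebra_grading G) (H_grading : is_algebra_grading H).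
Hypotheses (G0_scalar : degree0_is_scalars G) (H0_scalar : degree0_is_scalars H).
Hypotheses (G1_gen : generates_algebra (G 1)) (H1_gen : generates_algebra (H 1)).
Hypothesis G1_or_H1_fd : finite_dimensional (G 1) \/ finite_dimensional (H 1).

Local Notation hcompG := (hcomp G_grading).
Local Notation hcompH := (hcomp H_grading).
Local Notation deg_geG := (deg_ge G_grading).
Local Notation deg_leH := (deg_le H_grading).
Local Notation truncG := (trunc G_grading).
Local Notation truncH := (trunc H_grading).

Lemma deg_leH_finite_span j : exists xs, forall a, deg_leH j a <-> in_span xs a.
Proof.
case: G1_or_H1_fd => [G1_fd | H1_fd]; last exact: deg_le_finite_span.
have [xs xsP] := deg_le_finite_span G_grading j G1_gen G1_fd.
exists (map (truncH j) xs) => a; split=> [a_le | ].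
  have [g [/xsP g_xs ag]] := approx_exists H_grading G_grading H0_scalar G0_scalar G1_gen a j.
  by rewrite -(trunc_id a_le) (trunc_eq ag); apply: in_span_linear.
apply: subspace_span; first exact: deg_le_subspace.
by move=> _ /mapP[x _ ->]; apply: deg_le_trunc.
Qed.

Lemma deg_leH_deg_geG_eq0 j b : deg_leH j b -> deg_geG j.+1 b -> b = 0.
Proof.
move=> b_le b_ge; have [xs xsP] := deg_leH_finite_span j.
apply: (linear_surj_inj (L := truncH j \o truncG j) (xs := xs)); last 2 first.
- exact/xsP.
- by rewrite /= (trunc_deg_ge b_ge); apply: linear0.
- by move=> v _; apply/xsP/deg_le_trunc.
move=> v /xsP v_le.
have [g [g_le vg]] := approx_exists H_grading G_grading H0_scalar G0_scalar G1_gen v j.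
have [u [u_le gu]] := approx_exists G_grading H_grading G0_scalar H0_scalar H1_gen g j.
exists u; first exact/xsP.
by rewrite /= -(trunc_eq gu) (trunc_id g_le) -(trunc_eq vg) (trunc_id v_le).
Qed.

Definition approx j a := proj1_sig (constructive_indefinite_description _
  (approx_exists G_grading H_grading G0_scalar H0_scalar H1_gen a j)).

Lemma approxP j a : deg_leH j (approx j a) /\ deg_geG j.+1 (a - approx j a).
Proof. by rewrite /approx; case: constructive_indefinite_description. Qed.

Lemma approx_uniq j a b : deg_leH j b -> deg_geG j.+1 (a - b) -> approx j a = b.
Proof.
move=> b_le ab_ge; have [ap_le aap_ge] := approxP j a.
apply/eqP; rewrite -subr_eq0; apply/eqP/(deg_leH_deg_geG_eq0 (j := j)).
  exact: (subspaceB (deg_le_subspace _ _)).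
have -> : approx j a - b = (a - b) - (a - approx j a) by rewrite opprB [RHS]addrC subrKA.
exact: (subspaceB (deg_ge_subspace _ _)).
Qed.

Lemma approx_is_linear j : linear (approx j).
Proof.
move=> c x y; have [x_le x_ge] := approxP j x; have [y_le y_ge] := approxP j y.
apply: approx_uniq; first exact: (subspace_lin (deg_le_subspace _ _)).
rewrite opprD addrACA -scalerBr.
exact: (subspace_lin (deg_ge_subspace _ _)).
Qed.

HB.instance Definition _ j :=
  GRing.isLinear.Build k A A *:%R (approx j) (approx_is_linear j).

Definition sigma j a := hcompH j (approx j a).

Lemma sigma_is_linear j : linear (sigma j).
Proof. by move=> c x y; rewrite /sigma !linearP. Qed.

HB.instance Definition _ j :=
  GRing.isLinear.Build k A A *:%R (sigma j) (sigma_is_linear j).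

Lemma hom_approx_deg_ge j x : G j x -> deg_geG j (approx j x).
Proof.
move=> Gx; have [_ x_ge] := approxP j x; rewrite -(subKr x (approx j x)).
apply: (subspaceB (deg_ge_subspace _ _)); first exact: hom_deg_ge.
exact: deg_geW x_ge.
Qed.

Lemma sigmaM i j x y : G i x -> G j y -> sigma (i + j) (x * y) = sigma i x * sigma j y.
Proof.
move=> Gx Gy; have [x_le x_ge] := approxP i x; have [y_le y_ge] := approxP j y.
rewrite /sigma (@approx_uniq (i + j) (x * y) (approx i x * approx j y)).
- exact: hcompM_deg_le.
- exact: deg_leM.
have -> : x * y - approx i x * approx j y =
    x * (y - approx j y) + (x - approx i x) * approx j y.
  by rewrite mulrBr mulrBl addrA subrK.
apply: (subspaceD (deg_ge_subspace _ _)).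
  by rewrite -addnS; apply: deg_geM => //; apply: hom_deg_ge.
by rewrite -addSn; apply: deg_geM => //; apply: hom_approx_deg_ge.
Qed.

Lemma sigma_inj j x : G j x -> sigma j x = 0 -> x = 0.
Proof.
move=> Gx sx0; have [b_le xb_ge] := approxP j x.
suff b0 : approx j x = 0.
  by move: (xb_ge j (ltnSn j)); rewrite b0 subr0 (hcomp_hom _ _ Gx) eqxx.
case: j Gx sx0 b_le xb_ge => [|j] Gx sx0 b_le xb_ge.
  by rewrite -(trunc_id b_le) /trunc big_ord1.
apply: (deg_leH_deg_geG_eq0 (j := j)); last exact: hom_approx_deg_ge.
by move=> i; rewrite leq_eqVlt => /predU1P[<- //|/b_le].
Qed.

Definition regrade a := \sum_(j < deg_bound G_grading a) sigma j (hcompG j a).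

Lemma regradeE a N : (deg_bound G_grading a <= N)%N ->
  regrade a = \sum_(j < N) sigma j (hcompG j a).
Proof.
move=> aN; rewrite /regrade (@sum_ord_widen _ _ _ (fun j => sigma j (hcompG j a)) aN).
apply: eq_bigr => j _.
by case: ltnP => // ?; rewrite hcomp_ge_bound // linear0.
Qed.

Lemma regrade_is_linear : linear regrade.
Proof.
move=> c x y; pose N := maxn (deg_bound G_grading (c *: x + y))
  (maxn (deg_bound G_grading x) (deg_bound G_grading y)).
rewrite !(@regradeE _ N) ?leq_maxl // ?(leq_trans (leq_maxl _ _) (leq_maxr _ _))
  ?(leq_trans (leq_maxr _ _) (leq_maxr _ _)) //.
by rewrite scaler_sumr -big_split; apply: eq_bigr => j _; rewrite !linearP.
Qed.

HB.instance Definition _ :=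
  GRing.isLinear.Build k A A *:%R regrade regrade_is_linear.

Lemma regrade_hom i x : G i x -> regrade x = sigma i x.
Proof.
move=> Gx; pose N := maxn (deg_bound G_grading x) i.+1.
have iN : (i < N)%N by rewrite leq_max ltnSn orbT.
rewrite (@regradeE _ N) ?leq_maxl // (sum_ord_single (Ordinal iN)) /= ?(hcomp_hom _ _ Gx) ?eqxx //.
by move=> j; rewrite -(inj_eq val_inj) /= (hcomp_hom _ _ Gx) => /negbTE ->; rewrite linear0.
Qed.

Lemma hcomp_regrade j a : hcompH j (regrade a) = sigma j (hcompG j a).
Proof.
pose N := maxn (deg_bound G_grading a) j.+1.
have jN : (j < N)%N by rewrite leq_max ltnSn orbT.
rewrite (@regradeE _ N) ?leq_maxl // linear_sum (sum_ord_single (Ordinal jN)) /=.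
  by rewrite hcomp_id eqxx.
by move=> l; rewrite -(inj_eq val_inj) /= hcomp_id eq_sym => /negbTE ->.
Qed.

Lemma regrade1 : regrade 1 = 1.
Proof.
rewrite (regrade_hom (grading1 G_grading)) /sigma (@approx_uniq 0 1 1).
- by rewrite (hcomp_hom _ _ (grading1 H_grading)).
- exact: hom_deg_le (grading1 H_grading).
by rewrite subrr; apply: subspace0 (deg_ge_subspace _ _).
Qed.

Lemma regradeM x y : regrade (x * y) = regrade x * regrade y.
Proof.
pose N := maxn (deg_bound G_grading x) (deg_bound G_grading y).
have xN : (deg_bound G_grading x <= N)%N by apply: leq_maxl.
have yN : (deg_bound G_grading y <= N)%N by apply: leq_maxr.
rewrite (@regradeE (x * y) (maxn (deg_bound G_grading (x * y)) (N + N))) ?leq_maxl //.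
rewrite (regradeE xN) (regradeE yN) mulr_suml.
under eq_bigr => p _ do rewrite (hcompM p xN yN) linear_sum.
rewrite exchange_big /=; apply: eq_bigr => l _.
under eq_bigr => p _ do rewrite linear_sum.
rewrite exchange_big /= mulr_sumr; apply: eq_bigr => m _.
have lmN : (l + m < maxn (deg_bound G_grading (x * y)) (N + N))%N.
  by rewrite leq_max -addSn leq_add ?orbT // ltnW.
rewrite (sum_ord_single (Ordinal lmN)) /= ?eqxx; first by rewrite sigmaM //; apply: hcomp_graded.
by move=> p; rewrite -(inj_eq val_inj) /= eq_sym => /negbTE ->; rewrite linear0.
Qed.

HB.instance Definition _ :=
  GRing.isMonoidMorphism.Build A A regrade (conj regrade1 regradeM).

Definition regrade_lrmorphism : {lrmorphism A -> A} := regrade.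

Lemma regrade_inj : injective regrade.
Proof.
move=> x y /eqP; rewrite -subr_eq0 -linearB /= => /eqP xy0; apply/eqP; rewrite -subr_eq0; apply/eqP.
rewrite (sum_hcomp (leqnn (deg_bound G_grading (x - y)))); apply: big1 => j _.
by apply: (sigma_inj (hcomp_graded _ _ _)); rewrite -hcomp_regrade xy0 linear0.
Qed.

(* H 1 lies in the image: the G-degree-1 part of [b] is sent to [b]. *)
Lemma regrade_surj y : exists x, regrade x = y.
Proof.
apply: (H1_gen (S := fun y => exists x, regrade x = y)).
- split; first by exists 1; apply: regrade1.
  + split=> [|c u v [x <-] [x' <-]]; first by exists 0; apply: linear0.
    by exists (c *: x + x'); apply: linearP.
  + by move=> u v [x <-] [x' <-]; exists (x * x'); apply: regradeM.
move=> b Hb; have [e eE] := (G0_scalar (hcompG 0 b)).1 (hcomp_graded _ _ _).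
have He : H 0 e%:A by apply/H0_scalar; exists e.
exists (hcompG 1 b); rewrite (regrade_hom (hcomp_graded _ 1 b)) /sigma.
rewrite (@approx_uniq 1 (hcompG 1 b) (b - e%:A)).
- by rewrite linearB /= (hcomp_hom _ 1 Hb) (hcomp_hom _ 1 He) subr0.
- by apply: (subspaceB (deg_le_subspace _ _)); [apply: hom_deg_le | apply: scalar_deg_le].
have -> : hcompG 1 b - (b - e%:A) = - (b - truncG 1 b).
  by rewrite /trunc big_ord_recr big_ord1 /= eE !opprB addrA (addrC (hcompG 1 b)).
by rewrite -scaleN1r; apply/(subspaceZ (deg_ge_subspace _ _))/deg_ge_sub_trunc.
Qed.

Lemma regrade_bij : bijective regrade_lrmorphism.
Proof.
have /all_sig[g gK] y : {x | regrade x = y} by apply: sig_eqW; apply: regrade_surj.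
by exists g => // x; apply: regrade_inj; rewrite gK.
Qed.

Lemma regrade_graded i y : H i y <-> exists x, G i x /\ regrade_lrmorphism x = y.
Proof.
rewrite /regrade_lrmorphism /=.
split=> [Hy | [x [Gx <-]]]; last by rewrite (regrade_hom Gx); apply: hcomp_graded.
have [x xy] := regrade_surj y; exists (hcompG i x); split; first exact: hcomp_graded.
by rewrite (regrade_hom (hcomp_graded _ _ _)) -hcomp_regrade xy (hcomp_hom _ _ Hy) eqxx.
Qed.

End Regrade.

Theorem corollary2 (k : fieldType) (A : algType k) (G H : nat -> A -> Prop) :
  is_algebra_grading G -> is_algebra_grading H ->
  degree0_is_scalars G -> degree0_is_scalars H ->
  generates_algebra (G 1%N) -> generates_algebra (H 1%N) ->
  finite_dimensional (G 1%N) \/ finite_dimensional (H 1%N) ->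
  exists phi : {lrmorphism A -> A}, bijective phi /\
    forall (i : nat) (y : A), H i y <-> exists x, G i x /\ phi x = y.
Proof.
move=> G_grading H_grading G0_scalar H0_scalar G1_gen H1_gen fd.
exists (regrade_lrmorphism G_grading H_grading G0_scalar H0_scalar G1_gen H1_gen fd); split.
  exact: regrade_bij.
exact: regrade_graded.
Qed.
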